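(* Let $X,Y$ be nonempty compact Hausdorff spaces, $E\neq\{0_E\}$ a complex locally convex space, and $T:C(X,E)\to C(Y,E)$ a map with $\operatorname{Ran}(TF-TG)\subset\operatorname{Ran}(F-G)$ for all $F,G\in C(X,E)$ and $T(1\otimes 0_E)=1\otimes 0_E$. Then for all $f,g\in C(X)$ and $u,v\in E$, $$T(f\otimes u+g\otimes v)=T(f\otimes u)+T(g\otimes v).$$
   Context: $C(X,E)$ is the vector space of continuous functions $X\to E$; $\operatorname{Ran}(F)=\{F(x):x\in X\}$; for $f\in C(X)$ and $u\in E$, $f\otimes u$ denotes $x\mapsto f(x)u$, and $1\otimes 0_E$ is the constant function with value $0_E$. *)

From Stdlib Require Import Reals Lra List.
Open Scope R_scope.

Record C : Type := mkC { Re : R; Im : R }.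
Definition C0 : C := mkC 0 0.
Definition C1 : C := mkC 1 0.
Definition Cadd (a b : C) : C := mkC (Re a + Re b) (Im a + Im b).
Definition Copp (a : C) : C := mkC (- Re a) (- Im a).
Definition Csub (a b : C) : C := Cadd a (Copp b).
Definition Cmul (a b : C) : C :=
  mkC (Re a * Re b - Im a * Im b) (Re a * Im b + Im a * Re b).
Definition Cnorm (a : C) : R := sqrt (Re a * Re a + Im a * Im a).

Lemma Cnorm_nonneg a : 0 <= Cnorm a.
Proof. apply sqrt_pos. Qed.

Record TopSpace : Type := {
  tcar :> Type;
  topen : (tcar -> Prop) -> Prop;
  topen_full : topen (fun _ => True);
  topen_inter : forall U V, topen U -> topen V -> topen (fun x => U x /\ V x);
  topen_union : forall F : (tcar -> Prop) -> Prop,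
      (forall U, F U -> topen U) -> topen (fun x => exists U, F U /\ U x)
}.

Definition top_compact (X : TopSpace) : Prop :=
  forall F : (X -> Prop) -> Prop,
    (forall U, F U -> topen X U) ->
    (forall x, exists U, F U /\ U x) ->
    exists l : list (X -> Prop),
      Forall F l /\ forall x, exists U, In U l /\ U x.

Definition top_hausdorff (X : TopSpace) : Prop :=
  forall x y : X, x <> y ->
    exists U V, topen X U /\ topen X V /\ U x /\ V y /\
                forall z, ~ (U z /\ V z).

Record CVS : Type := {
  vcar :> Type;
  vzero : vcar;
  vadd : vcar -> vcar -> vcar;
  vopp : vcar -> vcar;
  vscal : C -> vcar -> vcar;
  vaddA : forall x y z, vadd x (vadd y z) = vadd (vadd x y) z;
  vaddC : forall x y, vadd x y = vadd y x;
  vadd0 : forall x, vadd vzero x = x;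
  vaddN : forall x, vadd x (vopp x) = vzero;
  vscal_addl : forall a b x, vscal (Cadd a b) x = vadd (vscal a x) (vscal b x);
  vscal_addr : forall a x y, vscal a (vadd x y) = vadd (vscal a x) (vscal a y);
  vscal_mul : forall a b x, vscal (Cmul a b) x = vscal a (vscal b x);
  vscal_1 : forall x, vscal C1 x = x
}.

Definition vsub (E : CVS) (x y : E) : E := vadd E x (vopp E y).

(** * Complex locally convex (Hausdorff) spaces: topology given by a
    separating family of seminorms. *)
Record LCS : Type := {
  lcs_vs :> CVS;
  lcs_idx : Type;
  sn : lcs_idx -> lcs_vs -> R;
  sn_nonneg : forall i x, 0 <= sn i x;
  sn_triangle : forall i x y, sn i (vadd lcs_vs x y) <= sn i x + sn i y;
  sn_hom : forall i a x, sn i (vscal lcs_vs a x) = Cnorm a * sn i x;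
  sn_sep : forall x, (forall i, sn i x = 0) -> x = vzero lcs_vs
}.

Definition contC (X : TopSpace) (f : X -> C) : Prop :=
  forall x eps, 0 < eps ->
    exists U, topen X U /\ U x /\ forall y, U y -> Cnorm (Csub (f y) (f x)) < eps.

Definition contE (X : TopSpace) (E : LCS) (F : X -> E) : Prop :=
  forall x i eps, 0 < eps ->
    exists U, topen X U /\ U x /\
      forall y, U y -> sn E i (vsub E (F y) (F x)) < eps.

Definition CX (X : TopSpace) := { f : X -> C | contC X f }.
Definition CXE (X : TopSpace) (E : LCS) := { F : X -> E | contE X E F }.

Definition Ran {X : Type} {E : Type} (F : X -> E) : E -> Prop :=
  fun e => exists x, F x = e.

Lemma contE_tensor (X : TopSpace) (E : LCS) (f : X -> C) (u : E) :
  contC X f -> contE X E (fun x => vscal E (f x) u).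
Proof.
  intros Hf x i eps Heps.
  set (M := sn E i u).
  assert (HM : 0 <= M) by apply sn_nonneg.
  set (d := eps / (M + 1)).
  assert (Hd : 0 < d) by (unfold d; apply Rdiv_lt_0_compat; lra).
  destruct (Hf x d Hd) as [U [HU [Ux HUy]]].
  exists U; split; [exact HU|split; [exact Ux|]].
  intros y Uy.
  assert (Heq : vsub E (vscal E (f y) u) (vscal E (f x) u)
                = vscal E (Csub (f y) (f x)) u).
  { assert (Hc : f y = Cadd (Csub (f y) (f x)) (f x)).
    { unfold Cadd, Csub, Copp; destruct (f y), (f x); simpl; f_equal; ring. }
    unfold vsub. rewrite Hc at 1. rewrite vscal_addl.
    rewrite <- vaddA, vaddN, vaddC, vadd0. reflexivity. }
  rewrite Heq, sn_hom. fold M.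
  specialize (HUy y Uy).
  assert (Hdm : d * (M + 1) = eps) by (unfold d; field; lra).
  pose proof (Cnorm_nonneg (Csub (f y) (f x))).
  nra.
Qed.

Lemma vopp_add (E : CVS) (x y : E) :
  vopp E (vadd E x y) = vadd E (vopp E x) (vopp E y).
Proof.
  assert (H : vadd E (vadd E x y) (vadd E (vopp E x) (vopp E y)) = vzero E).
  { rewrite (vaddC E (vopp E x)).
    rewrite vaddA, <- (vaddA E x y), vaddN, (vaddC E x (vzero E)), vadd0, vaddN.
    reflexivity. }
  set (w := vadd E (vopp E x) (vopp E y)) in *.
  set (s := vadd E x y) in *.
  rewrite <- (vadd0 E (vopp E s)).
  rewrite <- H, (vaddC E s w), <- vaddA, vaddN, vaddC, vadd0. reflexivity.
Qed.

Lemma contE_add (X : TopSpace) (E : LCS) (F G : X -> E) :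
  contE X E F -> contE X E G -> contE X E (fun x => vadd E (F x) (G x)).
Proof.
  intros HF HG x i eps Heps.
  destruct (HF x i (eps/2)) as [U [HU [Ux HUy]]]; [lra|].
  destruct (HG x i (eps/2)) as [V [HV [Vx HVy]]]; [lra|].
  exists (fun z => U z /\ V z); split; [apply topen_inter; assumption|].
  split; [split; assumption|].
  intros y [Uy Vy].
  assert (Heq : vsub E (vadd E (F y) (G y)) (vadd E (F x) (G x))
              = vadd E (vsub E (F y) (F x)) (vsub E (G y) (G x))).
  { unfold vsub. rewrite vopp_add.
    rewrite !vaddA. f_equal.
    rewrite <- !vaddA. f_equal. apply vaddC. }
  rewrite Heq.
  eapply Rle_lt_trans; [apply sn_triangle|].
  specialize (HUy y Uy). specialize (HVy y Vy). lra.
Qed.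

Lemma contC_const1 (X : TopSpace) : contC X (fun _ => C1).
Proof.
  intros x eps Heps. exists (fun _ => True).
  split; [apply topen_full|split; [exact I|]].
  intros y _. unfold Cnorm, Csub, Cadd, Copp, C1; simpl.
  replace ((1 + - (1)) * (1 + - (1)) + (0 + - (0)) * (0 + - (0))) with 0 by ring.
  rewrite sqrt_0. exact Heps.
Qed.

Definition tensor {X : TopSpace} {E : LCS} (f : CX X) (u : E) : CXE X E :=
  exist _ (fun x => vscal E (proj1_sig f x) u)
        (contE_tensor X E (proj1_sig f) u (proj2_sig f)).

Definition cadd {X : TopSpace} {E : LCS} (F G : CXE X E) : CXE X E :=
  exist _ (fun x => vadd E (proj1_sig F x) (proj1_sig G x))
        (contE_add X E _ _ (proj2_sig F) (proj2_sig G)).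

Definition fsub {X : Type} {E : CVS} (F G : X -> E) : X -> E :=
  fun x => vsub E (F x) (G x).

Definition one {X : TopSpace} : CX X := exist _ (fun _ => C1) (contC_const1 X).

(* For fixed y in Y and w <> 0 the range condition forces
   T (p ⊗ w) (y) = S p · w for a functional S : C(X) -> C with
   S F - S G ∈ Ran (F - G) and S F ∈ Ran F.  Such an S is additive: comparing
   S on pairs whose difference is real, purely imaginary, or a real multiple of
   1 + i yields S (A + i B) = S A + i S B and S (A + B) = S A + S B for
   real-valued A, B.  This settles the case v ∈ C u.  When v ∉ C u, the range
   conditions against T (f ⊗ u) and T (g ⊗ v) express T (f ⊗ u + g ⊗ v) (y) in
   two ways and linear independence matches the coefficients. *)

From Pilot Require Import Defs.
From Stdlib Require Import Reals Lra.
From Stdlib Require Import ProofIrrelevance FunctionalExtensionality Classical ClassicalEpsilon.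
From Coquelicot Require Complex.
Open Scope R_scope.
(* Re-import so that [C] denotes the complex numbers rather than Reals' binomial coefficient. *)
Import Defs.

Lemma sig_funext {A B : Type} {P : (A -> B) -> Prop} (F G : sig P) :
  (forall x, proj1_sig F x = proj1_sig G x) -> F = G.
Proof.
  destruct F as [f pf], G as [g pg]; simpl; intro H.
  apply functional_extensionality in H; subst g.
  f_equal; apply proof_irrelevance.
Qed.

Lemma C_ext (a b : C) : Re a = Re b -> Im a = Im b -> a = b.
Proof. destruct a, b; simpl; intros -> ->; reflexivity. Qed.

Lemma Csub_eq0 a b : Csub a b = C0 -> a = b.
Proof.
  intro H; pose proof (f_equal Re H); pose proof (f_equal Im H).
  simpl in *; apply C_ext; lra.
Qed.

Definition Ci : C := mkC 0 1.

Definition Cinv (z : C) : C :=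
  let n := Re z * Re z + Im z * Im z in mkC (Re z / n) (- Im z / n).

Lemma Cmul_inv_l z : z <> C0 -> Cmul (Cinv z) z = C1.
Proof.
  destruct z as [r s]; intro Hz.
  assert (Hn : r * r + s * s <> 0).
  { intro H0; apply Hz; unfold C0; f_equal; nra. }
  unfold Cinv, Cmul, C1; simpl; apply C_ext; simpl; field; exact Hn.
Qed.

Definition to_Complex (z : C) : Complex.C := (Re z, Im z).

Lemma Cnorm_Cmod z : Cnorm z = Complex.Cmod (to_Complex z).
Proof. unfold Cnorm, Complex.Cmod; simpl; f_equal; ring. Qed.

Lemma Cnorm_triangle a b : Cnorm (Cadd a b) <= Cnorm a + Cnorm b.
Proof. rewrite !Cnorm_Cmod; exact (Complex.Cmod_triangle (to_Complex a) (to_Complex b)). Qed.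

Lemma Cnorm_mul a b : Cnorm (Cmul a b) = Cnorm a * Cnorm b.
Proof. rewrite !Cnorm_Cmod; exact (Complex.Cmod_mult (to_Complex a) (to_Complex b)). Qed.

Lemma Rabs_Re_le z : Rabs (Re z) <= Cnorm z.
Proof.
  rewrite Cnorm_Cmod; eapply Rle_trans; [apply Rmax_l | exact (Complex.Rmax_Cmod (to_Complex z))].
Qed.

Lemma Rabs_Im_le z : Rabs (Im z) <= Cnorm z.
Proof.
  rewrite Cnorm_Cmod; eapply Rle_trans; [apply Rmax_r | exact (Complex.Rmax_Cmod (to_Complex z))].
Qed.

Lemma contC_lipschitz (X : TopSpace) (F G H : X -> C) (K : R) :
  contC X F -> contC X G ->
  (forall x y, Cnorm (Csub (H y) (H x))
               <= K * (Cnorm (Csub (F y) (F x)) + Cnorm (Csub (G y) (G x)))) ->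
  contC X H.
Proof.
  intros HF HG HK x eps Heps.
  set (d := eps / (2 * (Rabs K + 1))).
  assert (Hd : 0 < d) by (unfold d; pose proof (Rabs_pos K); apply Rdiv_lt_0_compat; lra).
  assert (Hdeps : 2 * (Rabs K + 1) * d = eps) by (unfold d; pose proof (Rabs_pos K); field; lra).
  destruct (HF x d Hd) as [U [HU [Ux HUy]]].
  destruct (HG x d Hd) as [V [HV [Vx HVy]]].
  exists (fun z => U z /\ V z); split; [apply topen_inter; assumption|].
  split; [split; assumption|].
  intros y [Uy Vy].
  specialize (HK x y); specialize (HUy y Uy); specialize (HVy y Vy).
  pose proof (Cnorm_nonneg (Csub (F y) (F x))).
  pose proof (Cnorm_nonneg (Csub (G y) (G x))).
  pose proof (Rle_abs K); pose proof (Rabs_pos K).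
  nra.
Qed.

Lemma contC_lipschitz1 (X : TopSpace) (F H : X -> C) (K : R) :
  contC X F ->
  (forall x y, Cnorm (Csub (H y) (H x)) <= K * Cnorm (Csub (F y) (F x))) ->
  contC X H.
Proof.
  intros HF HK; apply (contC_lipschitz X F F H K HF HF); intros x y.
  specialize (HK x y); pose proof (Cnorm_nonneg (Csub (F y) (F x))).
  destruct (Rle_dec 0 K); [nra|].
  pose proof (Cnorm_nonneg (Csub (H y) (H x))); nra.
Qed.

Section ContinuousFunctions.
Context {X : TopSpace}.

Lemma contC_add (f g : X -> C) :
  contC X f -> contC X g -> contC X (fun x => Cadd (f x) (g x)).
Proof.
  intros Hf Hg; apply (contC_lipschitz X f g _ 1 Hf Hg); intros x y.
  replace (Csub (Cadd (f y) (g y)) (Cadd (f x) (g x)))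
    with (Cadd (Csub (f y) (f x)) (Csub (g y) (g x)))
    by (apply C_ext; simpl; ring).
  rewrite Rmult_1_l; apply Cnorm_triangle.
Qed.

Lemma contC_scale (c : C) (f : X -> C) : contC X f -> contC X (fun x => Cmul c (f x)).
Proof.
  intro Hf; apply (contC_lipschitz1 X f _ (Cnorm c) Hf); intros x y.
  replace (Csub (Cmul c (f y)) (Cmul c (f x))) with (Cmul c (Csub (f y) (f x)))
    by (apply C_ext; simpl; ring).
  rewrite Cnorm_mul; apply Rle_refl.
Qed.

Lemma contC_Re (f : X -> C) : contC X f -> contC X (fun x => mkC (Re (f x)) 0).
Proof.
  intro Hf; apply (contC_lipschitz1 X f _ 1 Hf); intros x y.
  rewrite Rmult_1_l; eapply Rle_trans; [|apply Rabs_Re_le].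
  unfold Cnorm; simpl; rewrite <- sqrt_Rsqr_abs; unfold Rsqr.
  apply Req_le; f_equal; ring.
Qed.

Lemma contC_Im (f : X -> C) : contC X f -> contC X (fun x => mkC (Im (f x)) 0).
Proof.
  intro Hf; apply (contC_lipschitz1 X f _ 1 Hf); intros x y.
  rewrite Rmult_1_l; eapply Rle_trans; [|apply Rabs_Im_le].
  unfold Cnorm; simpl; rewrite <- sqrt_Rsqr_abs; unfold Rsqr.
  apply Req_le; f_equal; ring.
Qed.

Definition cx_add (F G : CX X) : CX X :=
  exist _ _ (contC_add _ _ (proj2_sig F) (proj2_sig G)).
Definition cx_scale (c : C) (F : CX X) : CX X :=
  exist _ _ (contC_scale c _ (proj2_sig F)).
Definition cx_Re (F : CX X) : CX X := exist _ _ (contC_Re _ (proj2_sig F)).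
Definition cx_Im (F : CX X) : CX X := exist _ _ (contC_Im _ (proj2_sig F)).

Definition cx_real (A : CX X) : Prop := forall x, Im (proj1_sig A x) = 0.

Lemma cx_real_Re F : cx_real (cx_Re F).
Proof. intro x; reflexivity. Qed.

Lemma cx_real_Im F : cx_real (cx_Im F).
Proof. intro x; reflexivity. Qed.

Lemma cx_real_add A B : cx_real A -> cx_real B -> cx_real (cx_add A B).
Proof. intros HA HB x; simpl; rewrite HA, HB; ring. Qed.

Lemma cx_Re_Im_decomp F : F = cx_add (cx_Re F) (cx_scale Ci (cx_Im F)).
Proof. apply sig_funext; intro x; apply C_ext; simpl; ring. Qed.

End ContinuousFunctions.


Section RangeDecreasingFunctional.
Variable X : TopSpace.
Variable S : CX X -> C.
Hypothesis S_sub_range : forall F G : CX X, exists x,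
  Csub (S F) (S G) = Csub (proj1_sig F x) (proj1_sig G x).
Hypothesis S_range : forall F : CX X, exists x, S F = proj1_sig F x.

Lemma S_real A : cx_real A -> Im (S A) = 0.
Proof. intro HA; destruct (S_range A) as [x ->]; apply HA. Qed.

Lemma S_Ci_real A : cx_real A -> S (cx_scale Ci A) = Cmul Ci (S A).
Proof.
  intro HA; pose proof (S_real A HA).
  destruct (S_range (cx_scale Ci A)) as [x1 H1].
  destruct (S_sub_range (cx_scale Ci A) A) as [x2 H2].
  pose proof (HA x1); pose proof (HA x2).
  pose proof (f_equal Re H1); pose proof (f_equal Re H2); pose proof (f_equal Im H2).
  simpl in *; apply C_ext; simpl; lra.
Qed.

Lemma S_real_imag A B : cx_real A -> cx_real B ->
  S (cx_add A (cx_scale Ci B)) = Cadd (S A) (Cmul Ci (S B)).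
Proof.
  intros HA HB; pose proof (S_real A HA); pose proof (S_real B HB).
  pose proof (S_Ci_real B HB) as HiB.
  destruct (S_sub_range (cx_add A (cx_scale Ci B)) A) as [x1 H1].
  destruct (S_sub_range (cx_add A (cx_scale Ci B)) (cx_scale Ci B)) as [x2 H2].
  pose proof (HA x1); pose proof (HB x1); pose proof (HA x2); pose proof (HB x2).
  pose proof (f_equal Re H1); pose proof (f_equal Im H2); pose proof (f_equal Im HiB).
  simpl in *; apply C_ext; simpl; lra.
Qed.

(* Compare [(A + B) + i B] with [A]: the difference [(1 + i) B] has equal real
   and imaginary parts. *)
Lemma S_add_real A B : cx_real A -> cx_real B ->
  S (cx_add A B) = Cadd (S A) (S B).
Proof.
  intros HA HB; pose proof (cx_real_add A B HA HB) as HAB.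
  pose proof (S_real A HA); pose proof (S_real B HB); pose proof (S_real _ HAB).
  pose proof (S_real_imag (cx_add A B) B HAB HB) as HW.
  destruct (S_sub_range (cx_add (cx_add A B) (cx_scale Ci B)) A) as [x Hx].
  rewrite HW in Hx; pose proof (HA x); pose proof (HB x).
  pose proof (f_equal Re Hx); pose proof (f_equal Im Hx).
  simpl in *; apply C_ext; simpl; lra.
Qed.

Lemma S_add F G : S (cx_add F G) = Cadd (S F) (S G).
Proof.
  assert (Hsplit : cx_add F G = cx_add (cx_add (cx_Re F) (cx_Re G))
                                       (cx_scale Ci (cx_add (cx_Im F) (cx_Im G)))).
  { apply sig_funext; intro x; apply C_ext; simpl; ring. }
  pose proof (S_real_imag _ _ (cx_real_Re F) (cx_real_Im F)) as HF.
  pose proof (S_real_imag _ _ (cx_real_Re G) (cx_real_Im G)) as HG.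
  rewrite <- cx_Re_Im_decomp in HF, HG.
  rewrite Hsplit, HF, HG, S_real_imag, !S_add_real;
    auto using cx_real_Re, cx_real_Im, cx_real_add.
  apply C_ext; simpl; ring.
Qed.

End RangeDecreasingFunctional.

Section VectorSpace.
Context {E : CVS}.

Lemma vadd0r (x : E) : vadd E x (vzero E) = x.
Proof. rewrite vaddC; apply vadd0. Qed.

Lemma vsub_add (x z : E) : vsub E (vadd E x z) z = x.
Proof. unfold vsub; rewrite <- vaddA, vaddN; apply vadd0r. Qed.

Lemma vadd_sub (x y : E) : vadd E (vsub E x y) y = x.
Proof. unfold vsub; rewrite <- vaddA, (vaddC E (vopp E y)), vaddN; apply vadd0r. Qed.

Lemma vsub0 (x : E) : vsub E x (vzero E) = x.
Proof. rewrite <- (vadd0r x) at 1; apply vsub_add. Qed.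

Lemma vsub_eq_add (x y z : E) : vsub E x y = z -> x = vadd E z y.
Proof. intros <-; symmetry; apply vadd_sub. Qed.

Lemma vadd_eq_sub (x1 y1 x2 y2 : E) :
  vadd E x1 y1 = vadd E x2 y2 -> vsub E y1 y2 = vsub E x2 x1.
Proof.
  intro H.
  assert (Hx2 : x2 = vsub E (vadd E x1 y1) y2) by (rewrite H; symmetry; apply vsub_add).
  rewrite Hx2; unfold vsub.
  rewrite <- (vaddA E x1 y1), (vaddC E x1 (vadd E y1 (vopp E y2))).
  symmetry; apply vsub_add.
Qed.

Lemma vscal0 (c : C) : vscal E c (vzero E) = vzero E.
Proof.
  rewrite <- (vsub_add (vscal E c (vzero E)) (vscal E c (vzero E))).
  rewrite <- vscal_addr, vadd0; unfold vsub; apply vaddN.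
Qed.

Lemma vscal_sub (a b : C) (w : E) :
  vsub E (vscal E a w) (vscal E b w) = vscal E (Csub a b) w.
Proof.
  replace a with (Cadd (Csub a b) b) at 1 by (apply C_ext; simpl; ring).
  rewrite vscal_addl; apply vsub_add.
Qed.

Lemma vscal_inv_l (c : C) (x : E) : c <> C0 -> vscal E (Cinv c) (vscal E c x) = x.
Proof. intro Hc; rewrite <- vscal_mul, Cmul_inv_l by exact Hc; apply vscal_1. Qed.

Lemma vscal_inj (a b : C) (w : E) : w <> vzero E -> vscal E a w = vscal E b w -> a = b.
Proof.
  intros Hw H; apply Csub_eq0.
  destruct (classic (Csub a b = C0)) as [H0|H0]; [exact H0|].
  exfalso; apply Hw.
  rewrite <- (vscal_inv_l (Csub a b) w H0), <- vscal_sub, H.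
  unfold vsub; rewrite vaddN; apply vscal0.
Qed.

Lemma vscal_indep_r (u v : E) (a b a' b' : C) :
  ~ (exists c, v = vscal E c u) ->
  vadd E (vscal E a u) (vscal E b v) = vadd E (vscal E a' u) (vscal E b' v) -> b = b'.
Proof.
  intros Hv H; apply Csub_eq0.
  destruct (classic (Csub b b' = C0)) as [H0|H0]; [exact H0|].
  exfalso; apply Hv; exists (Cmul (Cinv (Csub b b')) (Csub a' a)).
  apply vadd_eq_sub in H; rewrite !vscal_sub in H.
  rewrite vscal_mul, <- H; symmetry; apply vscal_inv_l, H0.
Qed.

End VectorSpace.

Lemma cadd_zero_l {Z : TopSpace} {E : LCS} (F : CXE Z E) :
  cadd (tensor one (vzero E)) F = F.
Proof. apply sig_funext; intro x; simpl; rewrite vscal0; apply vadd0. Qed.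

Lemma tensor_zero {X : TopSpace} {E : LCS} (f : CX X) :
  tensor f (vzero E) = tensor one (vzero E).
Proof. apply sig_funext; intro x; simpl; rewrite !vscal0; reflexivity. Qed.

Lemma tensor_vscal {X : TopSpace} {E : LCS} (c : C) (g : CX X) (u : E) :
  tensor g (vscal E c u) = tensor (cx_scale c g) u.
Proof.
  apply sig_funext; intro x; simpl; rewrite <- vscal_mul; f_equal.
  apply C_ext; simpl; ring.
Qed.

Lemma cadd_tensor {X : TopSpace} {E : LCS} (f g : CX X) (u : E) :
  cadd (tensor f u) (tensor g u) = tensor (cx_add f g) u.
Proof. apply sig_funext; intro x; simpl; symmetry; apply vscal_addl. Qed.

Section RangeDecreasingMap.
Variables (X Y : TopSpace) (E : LCS) (T : CXE X E -> CXE Y E).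
Hypothesis hRan : forall F G : CXE X E,
  forall e, Ran (fsub (proj1_sig (T F)) (proj1_sig (T G))) e ->
            Ran (fsub (proj1_sig F) (proj1_sig G)) e.
Hypothesis hT0 : T (tensor one (vzero E)) = tensor one (vzero E).

Lemma T_sub_range (F G : CXE X E) (y : Y) : exists x,
  vsub E (proj1_sig (T F) y) (proj1_sig (T G) y) = vsub E (proj1_sig F x) (proj1_sig G x).
Proof.
  destruct (hRan F G _ (ex_intro _ y eq_refl)) as [x Hx].
  exists x; symmetry; exact Hx.
Qed.

Lemma T_range (F : CXE X E) (y : Y) : exists x, proj1_sig (T F) y = proj1_sig F x.
Proof.
  destruct (T_sub_range F (tensor one (vzero E)) y) as [x Hx].
  rewrite hT0 in Hx; simpl in Hx; rewrite !vscal0, !vsub0 in Hx.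
  exists x; exact Hx.
Qed.

Lemma T_tensor_collinear (y : Y) (w : E) (p : CX X) :
  exists c, proj1_sig (T (tensor p w)) y = vscal E c w.
Proof. destruct (T_range (tensor p w) y) as [x Hx]; exists (proj1_sig p x); exact Hx. Qed.

Definition coeff (y : Y) (w : E) (p : CX X) : C :=
  proj1_sig (constructive_indefinite_description _ (T_tensor_collinear y w p)).

Lemma T_tensor_coeff y w p : proj1_sig (T (tensor p w)) y = vscal E (coeff y w p) w.
Proof. exact (proj2_sig (constructive_indefinite_description _ (T_tensor_collinear y w p))). Qed.

Lemma coeff_sub_range y w : w <> vzero E -> forall F G : CX X, exists x,
  Csub (coeff y w F) (coeff y w G) = Csub (proj1_sig F x) (proj1_sig G x).
Proof.
  intros Hw F G; destruct (T_sub_range (tensor F w) (tensor G w) y) as [x Hx].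
  exists x; rewrite !T_tensor_coeff in Hx; simpl in Hx; rewrite !vscal_sub in Hx.
  exact (vscal_inj _ _ _ Hw Hx).
Qed.

Lemma coeff_range y w : w <> vzero E -> forall F : CX X, exists x,
  coeff y w F = proj1_sig F x.
Proof.
  intros Hw F; destruct (T_range (tensor F w) y) as [x Hx].
  exists x; rewrite T_tensor_coeff in Hx; exact (vscal_inj _ _ _ Hw Hx).
Qed.

Lemma T_add_collinear (f g : CX X) (u : E) (c : C) : u <> vzero E ->
  T (cadd (tensor f u) (tensor g (vscal E c u))) =
  cadd (T (tensor f u)) (T (tensor g (vscal E c u))).
Proof.
  intro Hu; rewrite !tensor_vscal, cadd_tensor.
  apply sig_funext; intro y; simpl; rewrite !T_tensor_coeff.
  rewrite (S_add X (coeff y u) (coeff_sub_range y u Hu) (coeff_range y u Hu)).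
  apply vscal_addl.
Qed.

(* Both [T (f ⊗ u) (y) + g(x1) v] and [f(x2) u + T (g ⊗ v) (y)] equal
   [T (f ⊗ u + g ⊗ v) (y)]; comparing [v]-coordinates gives [g(x1) v = T (g ⊗ v) (y)]. *)
Lemma T_add_independent (f g : CX X) (u v : E) : ~ (exists c, v = vscal E c u) ->
  T (cadd (tensor f u) (tensor g v)) = cadd (T (tensor f u)) (T (tensor g v)).
Proof.
  intro Hv; apply sig_funext; intro y; simpl.
  set (H := cadd (tensor f u) (tensor g v)).
  destruct (T_sub_range H (tensor f u) y) as [x1 H1].
  destruct (T_sub_range H (tensor g v) y) as [x2 H2].
  destruct (T_range (tensor f u) y) as [x3 H3].
  destruct (T_range (tensor g v) y) as [x4 H4].
  simpl in H1, H2, H3, H4.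
  rewrite (vaddC E (vscal E (proj1_sig f x1) u)), vsub_add in H1.
  rewrite vsub_add in H2.
  apply vsub_eq_add in H1; apply vsub_eq_add in H2.
  rewrite H3 in H1; rewrite H4 in H2.
  assert (Hg : proj1_sig g x1 = proj1_sig g x4).
  { apply (vscal_indep_r u v (proj1_sig f x3) _ (proj1_sig f x2) _ Hv).
    rewrite (vaddC E (vscal E (proj1_sig f x3) u)), <- H1; exact H2. }
  rewrite H1, H3, H4, Hg; apply vaddC.
Qed.

End RangeDecreasingMap.

Theorem lemma4p4 (X Y : TopSpace) (E : LCS)
  (hX : top_compact X) (hXH : top_hausdorff X) (hXne : inhabited X)
  (hY : top_compact Y) (hYH : top_hausdorff Y) (hYne : inhabited Y)
  (hE : exists e : E, e <> vzero E)
  (T : CXE X E -> CXE Y E)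
  (hRan : forall F G : CXE X E,
      forall e, Ran (fsub (proj1_sig (T F)) (proj1_sig (T G))) e ->
                Ran (fsub (proj1_sig F) (proj1_sig G)) e)
  (hT0 : T (tensor one (vzero E)) = tensor one (vzero E)) :
  forall (f g : CX X) (u v : E),
    T (cadd (tensor f u) (tensor g v)) = cadd (T (tensor f u)) (T (tensor g v)).
Proof.
  intros f g u v.
  destruct (classic (u = vzero E)) as [->|Hu].
  - rewrite tensor_zero, hT0, !cadd_zero_l; reflexivity.
  - destruct (classic (exists c, v = vscal E c u)) as [[c ->]|Hv].
    + exact (T_add_collinear X Y E T hRan hT0 f g u c Hu).
    + exact (T_add_independent X Y E T hRan hT0 f g u v Hv).
Qed.
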